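(* Let $\alpha\in(0,1)$ and let $\{x_i\}_{i=1}^{\infty}$ be any countable subset of $SU(2)$. Then there exists a real-valued function $f\in\mathrm{Lip}_{\alpha}(SU(2))$ such that \[ \sup_{N\geq 1}|S_N f(x_i)|=\infty \quad\text{for all } i=1,2,3,\ldots. \]
   Context: $SU(2)$ is the group of $2\times 2$ complex unitary matrices of determinant $1$, equipped with the metric $d(x,y)=\sqrt{\tfrac12\mathrm{tr}((x-y)(x-y)^* )}$. For $0<\alpha<1$, $\mathrm{Lip}_{\alpha}(SU(2))$ is the set of real functions $f$ on $SU(2)$ for which there is $M\ge 0$ with $|f(x)-f(y)|\le M d(x,y)^{\alpha}$ for all $x,y\in SU(2)$. Let $\mu$ be normalized Haar measure on $SU(2)$. For each $x\in SU(2)$ with eigenvalues $e^{\pm i\theta}$, $\theta\in[0,\pi]$, the character of the $(n+1)$-dimensional irreducible unitary representation is $\chi_n(x)=\frac{\sin((n+1)\theta)}{\sin\theta}$ (interpreted by continuity at $\theta=0,\pi$). The Dirichlet kernel is $\mathbf{D}_N(x)=\sum_{n=0}^N (n+1)\chi_n(x)$, and for $f\in L^1(SU(2))$ the $N$th Fourier partial sum is $S_Nf(x)=(f*\mathbf{D}_N)(x)=\int_{SU(2)} f(xy^{-1})\mathbf{D}_N(y)\,d\mu(y)$. *)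

From Stdlib Require Import Reals Lra Psatz.
From Coquelicot Require Import Coquelicot.
Open Scope R_scope.

Definition csq (z : C) : R := (fst z) ^ 2 + (snd z) ^ 2.

(* An element of SU(2) is a matrix [[a, -conj b], [b, conj a]] with
   |a|^2 + |b|^2 = 1 (this is exactly the set of 2x2 complex unitary
   matrices of determinant 1).  We store the pair (a, b). *)
Record SU2 := mkSU2 { su_a : C ; su_b : C ; su_unit : csq su_a + csq su_b = 1 }.

Lemma su2_mul_unit (x y : SU2) :
  csq (Cminus (Cmult (su_a x) (su_a y)) (Cmult (Cconj (su_b x)) (su_b y)))
  + csq (Cplus (Cmult (su_b x) (su_a y)) (Cmult (Cconj (su_a x)) (su_b y))) = 1.
Proof.
  destruct x as [[a1 a2] [b1 b2] Hx]; destruct y as [[c1 c2] [d1 d2] Hy].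
  unfold csq in *; unfold Cminus, Cplus, Cmult, Cconj, Copp in *; cbn [fst snd su_a su_b] in *.
  transitivity ((a1 ^ 2 + a2 ^ 2 + (b1 ^ 2 + b2 ^ 2)) * (c1 ^ 2 + c2 ^ 2 + (d1 ^ 2 + d2 ^ 2))).
  - ring.
  - rewrite Hx, Hy; ring.
Qed.

(* Matrix product: [[a,-conj b],[b,conj a]] [[c,-conj d],[d,conj c]] has first column
   (a c - conj(b) d, b c + conj(a) d). *)
Definition su2_mul (x y : SU2) : SU2 :=
  mkSU2 _ _ (su2_mul_unit x y).

Lemma su2_inv_unit (x : SU2) : csq (Cconj (su_a x)) + csq (Copp (su_b x)) = 1.
Proof.
  destruct x as [[a1 a2] [b1 b2] Hx]; unfold csq in *; unfold Cconj, Copp in *; cbn [fst snd su_a su_b] in *.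
  rewrite <- Hx; ring.
Qed.

(* Inverse = conjugate transpose [[conj a, conj b], [-b, a]]. *)
Definition su2_inv (x : SU2) : SU2 := mkSU2 _ _ (su2_inv_unit x).

(* d(x,y) = sqrt(1/2 tr((x-y)(x-y)^H)) = sqrt(|a-c|^2 + |b-d|^2). *)
Definition su2_dist (x y : SU2) : R :=
  sqrt (csq (Cminus (su_a x) (su_a y)) + csq (Cminus (su_b x) (su_b y))).

(* d^alpha, with 0^alpha = 0 (alpha > 0). *)
Definition hpow (d alpha : R) : R :=
  if Req_EM_T d 0 then 0 else Rpower d alpha.

Definition Lip (alpha : R) (f : SU2 -> R) : Prop :=
  exists M : R, 0 <= M /\
    forall x y : SU2, Rabs (f x - f y) <= M * hpow (su2_dist x y) alpha.

(* Eigenvalues of x are e^{+-i theta}, theta in [0,pi]; tr x = 2 Re a = 2 cos theta. *)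
Definition su2_angle (x : SU2) : R := acos (fst (su_a x)).

(* chi_n(x) = sin((n+1)theta)/sin theta, extended by continuity at 0, pi. *)
Definition chi (n : nat) (x : SU2) : R :=
  let th := su2_angle x in
  if Req_EM_T th 0 then INR (n + 1)
  else if Req_EM_T th PI then (-1) ^ n * INR (n + 1)
  else sin (INR (n + 1) * th) / sin th.

Definition dirichlet (N : nat) (x : SU2) : R :=
  sum_f_R0 (fun n => INR (n + 1) * chi n x) N.

Lemma hopf_unit (e t1 t2 : R) :
  csq (cos e * cos t1, cos e * sin t1) + csq (sin e * cos t2, sin e * sin t2) = 1.
Proof.
  unfold csq; simpl.
  pose proof (sin2_cos2 e); pose proof (sin2_cos2 t1); pose proof (sin2_cos2 t2).
  unfold Rsqr in *.
  transitivity (cos e * cos e * (sin t1 * sin t1 + cos t1 * cos t1)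
                + sin e * sin e * (sin t2 * sin t2 + cos t2 * cos t2)); [ring|].
  rewrite H0, H1; lra.
Qed.

(* Hopf coordinates: a = cos(eta) e^{i t1}, b = sin(eta) e^{i t2},
   eta in [0, pi/2], t1, t2 in [0, 2 pi]. *)
Definition hopf (e t1 t2 : R) : SU2 := mkSU2 _ _ (hopf_unit e t1 t2).

(* Integral against normalized Haar measure on SU(2) (= normalized uniform
   measure on S^3), written in Hopf coordinates, where the volume element is
   sin(eta) cos(eta) d eta dt1 dt2 and the total volume is 2 pi^2. *)
Definition haar_int (g : SU2 -> R) : R :=
  / (2 * PI ^ 2) *
  RInt (fun e =>
    RInt (fun t1 =>
      RInt (fun t2 => g (hopf e t1 t2) * (sin e * cos e)) 0 (2 * PI)) 0 (2 * PI))
    0 (PI / 2).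

(* S_N f (x) = (f * D_N)(x) = int f(x y^{-1}) D_N(y) dmu(y) *)
Definition partial_sum (N : nat) (f : SU2 -> R) (x : SU2) : R :=
  haar_int (fun y => f (su2_mul x (su2_inv y)) * dirichlet N y).

(* Write theta(x) in [0, PI] for the angle of x, so that cos theta(x) = Re a(x) and
   chi_n = U_n (cos theta) with U_n the Chebyshev polynomials of the second kind.  The hump
   z |-> A cos (N theta(x^-1 z)) = A T_N (Re a(x^-1 z)) is alpha-Hoelder with constant about
   |A| N^alpha.  By the Weyl integration formula a class function p(cos theta) has Haar integral
   (1/PI) int_0^(2 PI) p(cos t) sin^2 t dt, and cos(N t) is orthogonal to sin((n+1) t) sin t
   unless n = N - 2; hence the (N-1)-st partial sum of the hump at x equals -A (N-1)/2.
   Taking A = +-2^-k N^-alpha makes the Hoelder constants summable, while the partial sums at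
   the centres grow like 2^-k N^(1-alpha).  A gliding-hump construction aims the k-th hump at
   the points of the sequence in a Cantor enumeration, chooses N_k so that this partial sum
   exceeds k and all later humps are negligible against sup |D_(N_k - 1)|, and chooses the sign
   so that the hump does not cancel the partial sum of the earlier ones. *)

From Stdlib Require Import Reals Lra Lia Psatz FunctionalExtensionality List ClassicalEpsilon Cantor.
From Coquelicot Require Import Coquelicot.
Open Scope R_scope.

Definition su2_re (x : SU2) : R := fst (su_a x).

Lemma su2_coords_unit (x : SU2) :
  su2_re x ^ 2 + snd (su_a x) ^ 2 + fst (su_b x) ^ 2 + snd (su_b x) ^ 2 = 1.
Proof. destruct x as [[a1 a2] [b1 b2] H]; unfold su2_re, csq in *; simpl in *; lra. Qed.

Lemma su2_re_bound (x : SU2) : -1 <= su2_re x <= 1.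
Proof. pose proof (su2_coords_unit x); split; nra. Qed.

Lemma su2_dist_coords (x y : SU2) : su2_dist x y = sqrt
  ((su2_re x - su2_re y) ^ 2 + (snd (su_a x) - snd (su_a y)) ^ 2 +
   (fst (su_b x) - fst (su_b y)) ^ 2 + (snd (su_b x) - snd (su_b y)) ^ 2).
Proof. unfold su2_dist, su2_re, csq, Cminus, Cplus, Copp; simpl; f_equal; ring. Qed.

Lemma su2_dist_ge0 (x y : SU2) : 0 <= su2_dist x y.
Proof. apply sqrt_pos. Qed.

Lemma su2_dist_le2 (x y : SU2) : su2_dist x y <= 2.
Proof.
  rewrite su2_dist_coords, <- (sqrt_square 2) by lra; apply sqrt_le_1_alt.
  pose proof (su2_coords_unit x); pose proof (su2_coords_unit y).
  pose proof (pow2_ge_0 (su2_re x + su2_re y)).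
  pose proof (pow2_ge_0 (snd (su_a x) + snd (su_a y))).
  pose proof (pow2_ge_0 (fst (su_b x) + fst (su_b y))).
  pose proof (pow2_ge_0 (snd (su_b x) + snd (su_b y))). nra.
Qed.

Lemma su2_re_dist (x y : SU2) : Rabs (su2_re x - su2_re y) <= su2_dist x y.
Proof.
  rewrite su2_dist_coords, <- sqrt_Rsqr_abs; apply sqrt_le_1_alt; unfold Rsqr.
  pose proof (pow2_ge_0 (snd (su_a x) - snd (su_a y))).
  pose proof (pow2_ge_0 (fst (su_b x) - fst (su_b y))).
  pose proof (pow2_ge_0 (snd (su_b x) - snd (su_b y))). simpl; lra.
Qed.

Lemma su2_dist_mul_l (x y y' : SU2) :
  su2_dist (su2_mul x y) (su2_mul x y') = su2_dist y y'.
Proof.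
  rewrite !su2_dist_coords; f_equal. pose proof (su2_coords_unit x) as Hx.
  destruct x as [[a1 a2] [b1 b2] ?], y as [[c1 c2] [d1 d2] ?], y' as [[e1 e2] [f1 f2] ?].
  unfold su2_re, su2_mul, Cminus, Cplus, Cmult, Cconj, Copp in *; cbn [fst snd su_a su_b] in *.
  transitivity ((a1 ^ 2 + a2 ^ 2 + b1 ^ 2 + b2 ^ 2) *
    ((c1 - e1) ^ 2 + (c2 - e2) ^ 2 + (d1 - f1) ^ 2 + (d2 - f2) ^ 2)); [ring | rewrite Hx; ring].
Qed.

Lemma su2_dist_inv (y y' : SU2) : su2_dist (su2_inv y) (su2_inv y') = su2_dist y y'.
Proof.
  rewrite !su2_dist_coords; f_equal.
  destruct y as [[c1 c2] [d1 d2] ?], y' as [[e1 e2] [f1 f2] ?].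
  unfold su2_re, su2_inv, Cconj, Copp; simpl; ring.
Qed.

Lemma su2_re_inv (x : SU2) : su2_re (su2_inv x) = su2_re x.
Proof. reflexivity. Qed.

Lemma su2_re_inv_mulK (x w : SU2) : su2_re (su2_mul (su2_inv x) (su2_mul x w)) = su2_re w.
Proof.
  pose proof (su2_coords_unit x) as Hx.
  destruct x as [[a1 a2] [b1 b2] ?], w as [[c1 c2] [d1 d2] ?].
  unfold su2_re, su2_mul, su2_inv, Cminus, Cplus, Cmult, Cconj, Copp in *;
    cbn [fst snd su_a su_b] in *.
  transitivity ((a1 ^ 2 + a2 ^ 2 + b1 ^ 2 + b2 ^ 2) * c1); [ring | rewrite Hx; ring].
Qed.

Fixpoint peval (l : list R) (s : R) : R :=
  match l with nil => 0 | a :: l' => a + s * peval l' s end.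

Definition is_poly (F : R -> R) : Prop := exists l, forall s, F s = peval l s.

Fixpoint padd (l m : list R) : list R :=
  match l, m with
  | nil, _ => m
  | _, nil => l
  | a :: l', b :: m' => (a + b) :: padd l' m'
  end.

Lemma peval_padd l m s : peval (padd l m) s = peval l s + peval m s.
Proof.
  revert m; induction l as [|a l IH]; intros [|b m]; simpl; try ring.
  rewrite IH; ring.
Qed.

Lemma is_poly_ext F G : (forall s, F s = G s) -> is_poly F -> is_poly G.
Proof. intros H [l Hl]; exists l; intro s; rewrite <- H; auto. Qed.

Lemma is_poly_const c : is_poly (fun _ => c).
Proof. exists (c :: nil); intro; simpl; ring. Qed.

Lemma is_poly_id_mul F : is_poly F -> is_poly (fun s => s * F s).
Proof. intros [l Hl]; exists (0 :: l); intro s; simpl; rewrite Hl; ring. Qed.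

Lemma is_poly_plus F G : is_poly F -> is_poly G -> is_poly (fun s => F s + G s).
Proof. intros [l Hl] [m Hm]; exists (padd l m); intro s; rewrite peval_padd, Hl, Hm; ring. Qed.

Lemma is_poly_scal c F : is_poly F -> is_poly (fun s => c * F s).
Proof.
  intros [l Hl]; exists (map (Rmult c) l); intro s; rewrite Hl; clear Hl.
  induction l as [|a l IH]; simpl; [ring | rewrite <- IH; ring].
Qed.

Lemma is_poly_mult F G : is_poly F -> is_poly G -> is_poly (fun s => F s * G s).
Proof.
  intros [l Hl] HG; apply (is_poly_ext (fun s => peval l s * G s)); [intro; rewrite Hl; auto|].
  clear Hl.
  induction l as [|a l IH]; simpl.
  - apply (is_poly_ext (fun _ => 0)); [intro; ring | apply is_poly_const].
  - apply (is_poly_ext (fun s => a * G s + s * (peval l s * G s))); [intro; ring|].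
    apply is_poly_plus; [apply is_poly_scal | apply is_poly_id_mul]; auto.
Qed.

Lemma is_poly_sum (F : nat -> R -> R) N : (forall n, is_poly (F n)) ->
  is_poly (fun s => sum_f_R0 (fun n => F n s) N).
Proof. intro H; induction N; simpl; auto; apply is_poly_plus; auto. Qed.

Lemma peval_bounded_lipschitz l : exists K B, 0 <= K /\ 0 <= B /\
  forall s s', -1 <= s <= 1 -> -1 <= s' <= 1 ->
  Rabs (peval l s - peval l s') <= K * Rabs (s - s') /\ Rabs (peval l s) <= B.
Proof.
  induction l as [|a l [K [B [HK [HB H]]]]]; simpl.
  - exists 0, 0; do 2 (split; [lra|]); intros s s' _ _.
    rewrite Rminus_0_r, Rabs_R0; pose proof (Rabs_pos (s - s')); split; lra.
  - exists (K + B), (Rabs a + B); split; [lra|]; split; [pose proof (Rabs_pos a); lra|].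
    intros s s' Hs Hs'.
    destruct (H s s' Hs Hs') as [H1 H2]; destruct (H s' s' Hs' Hs') as [_ H3].
    assert (Rabs s <= 1) by (apply Rabs_le; lra).
    pose proof (Rabs_pos s); pose proof (Rabs_pos (s - s')); split.
    + replace (a + s * peval l s - (a + s' * peval l s'))
        with (s * (peval l s - peval l s') + (s - s') * peval l s') by ring.
      eapply Rle_trans; [apply Rabs_triang|]; rewrite !Rabs_mult.
      pose proof (Rabs_pos (peval l s - peval l s')); nra.
    + eapply Rle_trans; [apply Rabs_triang|]; rewrite Rabs_mult.
      pose proof (Rabs_pos (peval l s)); nra.
Qed.

Lemma is_poly_lipschitz F : is_poly F -> exists K, 0 <= K /\
  forall s s', -1 <= s <= 1 -> -1 <= s' <= 1 -> Rabs (F s - F s') <= K * Rabs (s - s').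
Proof.
  intros [l Hl]; destruct (peval_bounded_lipschitz l) as [K [B [HK [_ H]]]].
  exists K; split; [auto|]; intros s s' Hs Hs'; rewrite !Hl; apply H; auto.
Qed.

Lemma nat_ind2 (P : nat -> Prop) : P 0%nat -> P 1%nat ->
  (forall n, P n -> P (S n) -> P (S (S n))) -> forall n, P n.
Proof.
  intros H0 H1 HS n; enough (P n /\ P (S n)) by tauto.
  induction n as [|n [IH1 IH2]]; auto.
Qed.

Fixpoint cheb_T (n : nat) (s : R) : R :=
  match n with
  | 0 => 1
  | S m => match m with 0 => s | S k => 2 * s * cheb_T m s - cheb_T k s end
  end.

Fixpoint cheb_U (n : nat) (s : R) : R :=
  match n with
  | 0 => 1
  | S m => match m with 0 => 2 * s | S k => 2 * s * cheb_U m s - cheb_U k s end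
  end.

Lemma cheb_T_SS n s : cheb_T (S (S n)) s = 2 * s * cheb_T (S n) s - cheb_T n s.
Proof. reflexivity. Qed.

Lemma cheb_U_SS n s : cheb_U (S (S n)) s = 2 * s * cheb_U (S n) s - cheb_U n s.
Proof. reflexivity. Qed.

Lemma is_poly_cheb_rec (F : nat -> R -> R) :
  is_poly (F 0%nat) -> is_poly (F 1%nat) ->
  (forall n s, F (S (S n)) s = 2 * s * F (S n) s - F n s) -> forall n, is_poly (F n).
Proof.
  intros H0 H1 HS; induction n using nat_ind2; auto.
  apply (is_poly_ext (fun s => 2 * (s * F (S n) s) + (-1) * F n s)); [intro; rewrite HS; ring|].
  apply is_poly_plus; apply is_poly_scal; auto; apply is_poly_id_mul; auto.
Qed.

Lemma is_poly_cheb_T n : is_poly (cheb_T n).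
Proof.
  apply is_poly_cheb_rec; [apply is_poly_const | | apply cheb_T_SS].
  apply (is_poly_ext (fun s => s * 1)); [intro; simpl; ring|].
  apply is_poly_id_mul, is_poly_const.
Qed.

Lemma is_poly_cheb_U n : is_poly (cheb_U n).
Proof.
  apply is_poly_cheb_rec; [apply is_poly_const | | apply cheb_U_SS].
  apply (is_poly_ext (fun s => 2 * (s * 1))); [intro; simpl; ring|].
  apply is_poly_scal, is_poly_id_mul, is_poly_const.
Qed.

Lemma cos_mult_SS n t :
  cos (INR (S (S n)) * t) = 2 * cos t * cos (INR (S n) * t) - cos (INR n * t).
Proof.
  rewrite !S_INR.
  replace ((INR n + 1 + 1) * t) with ((INR n + 1) * t + t) by ring.
  replace (INR n * t) with ((INR n + 1) * t - t) by ring.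
  rewrite cos_plus, cos_minus; ring.
Qed.

Lemma sin_mult_SS n t :
  sin (INR (S (S n)) * t) = 2 * cos t * sin (INR (S n) * t) - sin (INR n * t).
Proof.
  rewrite !S_INR.
  replace ((INR n + 1 + 1) * t) with ((INR n + 1) * t + t) by ring.
  replace (INR n * t) with ((INR n + 1) * t - t) by ring.
  rewrite sin_plus, sin_minus; ring.
Qed.

Lemma cheb_T_cos n t : cheb_T n (cos t) = cos (INR n * t).
Proof.
  induction n using nat_ind2.
  - simpl; rewrite Rmult_0_l, cos_0; auto.
  - simpl; rewrite Rmult_1_l; auto.
  - rewrite cheb_T_SS, cos_mult_SS, IHn, IHn0; ring.
Qed.

Lemma cheb_U_cos n t : cheb_U n (cos t) * sin t = sin (INR (S n) * t).
Proof.
  induction n using nat_ind2.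
  - simpl; rewrite !Rmult_1_l; auto.
  - simpl cheb_U; replace (INR 2 * t) with (2 * t) by (simpl; ring); rewrite sin_2a; ring.
  - rewrite cheb_U_SS, sin_mult_SS, <- IHn, <- IHn0; ring.
Qed.

Lemma cheb_U_1 n : cheb_U n 1 = INR (S n).
Proof.
  induction n using nat_ind2; [simpl; ring | simpl; ring |].
  rewrite cheb_U_SS, IHn, IHn0, !S_INR; ring.
Qed.

Lemma cheb_U_m1 n : cheb_U n (-1) = (-1) ^ n * INR (S n).
Proof.
  induction n using nat_ind2; [simpl; ring | simpl; ring |].
  rewrite cheb_U_SS, IHn, IHn0, !S_INR; simpl; ring.
Qed.

Lemma chi_cheb_U n x : chi n x = cheb_U n (su2_re x).
Proof.
  unfold chi, su2_angle; fold (su2_re x); pose proof (su2_re_bound x) as Hb.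
  set (s := su2_re x) in *.
  pose proof (cos_acos s Hb) as Hc; pose proof (acos_bound s) as Ha.
  rewrite Nat.add_1_r.
  destruct (Req_EM_T (acos s) 0) as [E|E].
  - rewrite E, cos_0 in Hc; rewrite <- Hc, cheb_U_1; auto.
  - destruct (Req_EM_T (acos s) PI) as [E2|E2].
    + rewrite E2, cos_PI in Hc; rewrite <- Hc, cheb_U_m1; auto.
    + assert (0 < sin (acos s)) by (apply sin_gt_0; lra).
      rewrite <- (cheb_U_cos n (acos s)), Hc; field; lra.
Qed.

Lemma Rabs_sin_mult_le n t : Rabs (sin (INR (S n) * t)) <= INR (S n) * Rabs (sin t).
Proof.
  induction n.
  - simpl; rewrite Rmult_1_l; lra.
  - replace (INR (S (S n)) * t) with (INR (S n) * t + t) by (rewrite (S_INR (S n)); ring).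
    rewrite sin_plus; eapply Rle_trans; [apply Rabs_triang|]; rewrite !Rabs_mult.
    assert (Rabs (cos t) <= 1) by (apply Rabs_le, COS_bound).
    assert (Rabs (cos (INR (S n) * t)) <= 1) by (apply Rabs_le, COS_bound).
    pose proof (Rabs_pos (sin t)); pose proof (Rabs_pos (sin (INR (S n) * t))).
    pose proof (Rabs_pos (cos t)); pose proof (Rabs_pos (cos (INR (S n) * t))).
    rewrite (S_INR (S n)); nra.
Qed.

Lemma Rabs_chi_le n x : Rabs (chi n x) <= INR (n + 1).
Proof.
  rewrite chi_cheb_U, Nat.add_1_r; pose proof (su2_re_bound x) as Hb.
  rewrite <- (cos_acos _ Hb); set (t := acos (su2_re x)).
  pose proof (acos_bound (su2_re x)) as Ht; fold t in Ht.
  pose proof (pos_INR (S n)).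
  destruct (Req_EM_T t 0) as [E|E].
  { rewrite E, cos_0, cheb_U_1, Rabs_right; lra. }
  destruct (Req_EM_T t PI) as [E2|E2].
  { rewrite E2, cos_PI, cheb_U_m1, Rabs_mult, pow_1_abs, Rabs_right; lra. }
  assert (Hs : 0 < sin t) by (apply sin_gt_0; lra).
  apply (Rmult_le_reg_r (sin t)); [auto|].
  rewrite <- (Rabs_right (sin t)) at 1 by lra; rewrite <- Rabs_mult, cheb_U_cos.
  rewrite <- (Rabs_right (sin t)) by lra; apply Rabs_sin_mult_le.
Qed.

Definition dirichlet_poly (N : nat) (s : R) : R :=
  sum_f_R0 (fun n => INR (n + 1) * cheb_U n s) N.

Lemma is_poly_dirichlet N : is_poly (dirichlet_poly N).
Proof. apply is_poly_sum; intro n; apply is_poly_scal, is_poly_cheb_U. Qed.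

Lemma dirichlet_re N x : dirichlet N x = dirichlet_poly N (su2_re x).
Proof.
  unfold dirichlet, dirichlet_poly.
  induction N; cbn [sum_f_R0]; rewrite ?IHN, chi_cheb_U; auto.
Qed.

Definition dirichlet_sup (N : nat) : R := sum_f_R0 (fun n => INR (n + 1) ^ 2) N.

Lemma dirichlet_sup_ge0 N : 0 <= dirichlet_sup N.
Proof. apply cond_pos_sum; intro n; apply pow2_ge_0. Qed.

Lemma Rabs_dirichlet_le N x : Rabs (dirichlet N x) <= dirichlet_sup N.
Proof.
  unfold dirichlet, dirichlet_sup; eapply Rle_trans; [apply sum_f_R0_triangle|].
  apply sum_Rle; intros n _; rewrite Rabs_mult, (Rabs_right (INR _)) by (apply Rle_ge, pos_INR).
  pose proof (Rabs_chi_le n x); pose proof (pos_INR (n + 1)); simpl; nra.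
Qed.

(** * The Weyl integration formula *)

Lemma is_RInt_plusR (f g : R -> R) a b If Ig : is_RInt f a b If -> is_RInt g a b Ig ->
  is_RInt (fun x => f x + g x) a b (If + Ig).
Proof. apply (@is_RInt_plus R_NormedModule). Qed.

Lemma is_RInt_minusR (f g : R -> R) a b If Ig : is_RInt f a b If -> is_RInt g a b Ig ->
  is_RInt (fun x => f x - g x) a b (If - Ig).
Proof. apply (@is_RInt_minus R_NormedModule). Qed.

Lemma is_RInt_scalR (f : R -> R) a b k If : is_RInt f a b If ->
  is_RInt (fun x => k * f x) a b (k * If).
Proof. apply (@is_RInt_scal R_NormedModule). Qed.

Lemma is_RInt_constR a b v : is_RInt (fun _ => v) a b ((b - a) * v).
Proof. apply (@is_RInt_const R_NormedModule). Qed.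

Lemma is_RInt_extR (f g : R -> R) a b (l l' : R) :
  (forall x, f x = g x) -> l = l' -> is_RInt f a b l -> is_RInt g a b l'.
Proof. intros H <-; apply (@is_RInt_ext R_NormedModule f); auto. Qed.

Lemma is_RInt_zeroR a b : is_RInt (fun _ => 0) a b 0.
Proof. eapply is_RInt_extR; [| | apply (is_RInt_constR a b 0)]; intros; simpl; ring. Qed.

Lemma is_RInt_sumR (f : nat -> R -> R) (v : nat -> R) a b M :
  (forall n, (n <= M)%nat -> is_RInt (f n) a b (v n)) ->
  is_RInt (fun t => sum_f_R0 (fun n => f n t) M) a b (sum_f_R0 v M).
Proof. induction M; intros H; simpl; [|apply is_RInt_plusR]; auto. Qed.

Lemma is_RInt_deriveR (f df : R -> R) a b : (forall x, is_derive f x (df x)) ->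
  (forall x, ex_derive df x) -> is_RInt df a b (f b - f a).
Proof.
  intros H1 H2; apply (@is_RInt_derive R_CompleteNormedModule); intros; auto.
  apply (@ex_derive_continuous R_AbsRing R_NormedModule); auto.
Qed.

Lemma RInt_uniqR (f : R -> R) a b l : is_RInt f a b l -> RInt f a b = l.
Proof. apply (@is_RInt_unique R_CompleteNormedModule). Qed.

Lemma RInt_extR (f g : R -> R) a b : (forall x, f x = g x) -> RInt f a b = RInt g a b.
Proof. intros H; apply (@RInt_ext R_CompleteNormedModule); auto. Qed.

Definition cos_pow_int (k : nat) : R := RInt (fun t => cos t ^ k) 0 (2 * PI).

Lemma is_RInt_cos_pow k : is_RInt (fun t => cos t ^ k) 0 (2 * PI) (cos_pow_int k).
Proof.
  apply (@RInt_correct R_CompleteNormedModule), (@ex_RInt_continuous R_CompleteNormedModule).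
  intros; apply (@ex_derive_continuous R_AbsRing R_NormedModule); auto_derive; auto.
Qed.

Lemma INR_plus_2_pos k : 0 < INR (k + 2).
Proof. rewrite plus_INR; simpl; pose proof (pos_INR k); lra. Qed.

Lemma is_RInt_cos_pow_sin k :
  is_RInt (fun e => cos e ^ S k * sin e) 0 (PI / 2) (/ INR (k + 2)).
Proof.
  pose proof (INR_plus_2_pos k) as Hk; rewrite plus_INR in Hk; simpl in Hk.
  set (F := fun e => - cos e ^ S (S k) / INR (k + 2)).
  replace (/ INR (k + 2)) with (F (PI / 2) - F 0).
  - apply (is_RInt_deriveR F); intros x; unfold F; auto_derive; auto.
    change (match k with 0%nat => 1 | S _ => INR k + 1 end) with (INR (S k)).
    rewrite plus_INR, S_INR; simpl; field; lra.
  - unfold F; rewrite cos_PI2, cos_0, pow1, pow_i by lia; rewrite plus_INR; simpl; field; lra.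
Qed.

(* Integration by parts, with H(t) = cos^(k+1) t sin t vanishing at both ends. *)
Lemma is_RInt_cos_pow_sin2 k :
  is_RInt (fun t => cos t ^ k * sin t ^ 2) 0 (2 * PI) (cos_pow_int k / INR (k + 2)).
Proof.
  pose proof (INR_plus_2_pos k) as Hk.
  set (H := fun t => cos t ^ S k * sin t).
  set (dH := fun t => cos t ^ k - INR (k + 2) * (cos t ^ k * sin t ^ 2)).
  assert (IdH : is_RInt dH 0 (2 * PI) 0).
  { replace (is_RInt dH 0 (2 * PI) 0) with (is_RInt dH 0 (2 * PI) (H (2 * PI) - H 0))
      by (unfold H; rewrite sin_2PI, sin_0; f_equal; ring).
    apply (is_RInt_deriveR H); intros x; unfold H, dH; auto_derive; auto.
    change (match k with 0%nat => 1 | S _ => INR k + 1 end) with (INR (S k)).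
    rewrite plus_INR, S_INR; simpl.
    pose proof (sin2_cos2 x) as E; unfold Rsqr in E; apply Rminus_diag_uniq.
    transitivity (cos x ^ k * (sin x * sin x + cos x * cos x - 1)); [ring | rewrite E; ring]. }
  eapply is_RInt_extR;
    [| | exact (is_RInt_scalR _ _ _ (/ INR (k + 2)) _
           (is_RInt_minusR _ _ _ _ _ _ (is_RInt_cos_pow k) IdH))].
  all: try intros x; unfold dH; field; lra.
Qed.

Fixpoint weyl_inner (l : list R) (p : nat) (c : R) : R :=
  match l with nil => 0 | a :: l' => a * c ^ p * cos_pow_int p + weyl_inner l' (S p) c end.

Fixpoint weyl_value (l : list R) (p : nat) : R :=
  match l with nil => 0 | a :: l' => a * cos_pow_int p / INR (p + 2) + weyl_value l' (S p) end.

Lemma is_RInt_weyl_inner l : forall p c,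
  is_RInt (fun t => (c * cos t) ^ p * peval l (c * cos t)) 0 (2 * PI) (weyl_inner l p c).
Proof.
  induction l as [|a l IH]; intros p c; simpl.
  - eapply is_RInt_extR; [| | apply is_RInt_zeroR]; intros; simpl; ring.
  - eapply is_RInt_extR; [| | apply is_RInt_plusR;
      [apply (is_RInt_scalR (fun t => cos t ^ p) _ _ (a * c ^ p)), is_RInt_cos_pow |
       apply (IH (S p) c)]].
    + intros t; simpl; rewrite Rpow_mult_distr; ring.
    + ring.
Qed.

Lemma is_RInt_weyl_outer l : forall p,
  is_RInt (fun e => weyl_inner l p (cos e) * (sin e * cos e)) 0 (PI / 2) (weyl_value l p).
Proof.
  induction l as [|a l IH]; intros p; simpl.
  - eapply is_RInt_extR; [| | apply is_RInt_zeroR]; intros; simpl; ring.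
  - eapply is_RInt_extR; [| | apply is_RInt_plusR; [apply (is_RInt_scalR (fun e => cos e ^ S p * sin e)
      _ _ (a * cos_pow_int p)), is_RInt_cos_pow_sin | apply (IH (S p))]].
    + intros t; simpl; ring.
    + unfold Rdiv; ring.
Qed.

Lemma is_RInt_weyl_radial l : forall p,
  is_RInt (fun t => cos t ^ p * peval l (cos t) * sin t ^ 2) 0 (2 * PI) (weyl_value l p).
Proof.
  induction l as [|a l IH]; intros p; simpl.
  - eapply is_RInt_extR; [| | apply is_RInt_zeroR]; intros; simpl; ring.
  - eapply is_RInt_extR; [| | apply is_RInt_plusR; [apply (is_RInt_scalR
      (fun t => cos t ^ p * sin t ^ 2) _ _ a), is_RInt_cos_pow_sin2 | apply (IH (S p))]].
    + intros t; simpl; ring.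
    + unfold Rdiv; ring.
Qed.

(* Both sides equal weyl_value l 0, computed monomial by monomial. *)
Lemma haar_int_peval_re l : haar_int (fun y => peval l (su2_re y)) =
  / PI * RInt (fun t => peval l (cos t) * sin t ^ 2) 0 (2 * PI).
Proof.
  unfold haar_int, su2_re; cbn [hopf su_a fst].
  rewrite (RInt_extR _ (fun e => 2 * PI * (weyl_inner l 0 (cos e) * (sin e * cos e)))).
  - rewrite (RInt_uniqR _ _ _ (2 * PI * weyl_value l 0)) by apply is_RInt_scalR, is_RInt_weyl_outer.
    rewrite (RInt_uniqR _ _ _ (weyl_value l 0)).
    + pose proof PI_RGT_0; field; lra.
    + eapply is_RInt_extR; [| | apply (is_RInt_weyl_radial l 0)]; intros; simpl; ring.
  - intros e; rewrite (RInt_extR _ (fun t1 => 2 * PI * (sin e * cos e) *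
      ((cos e * cos t1) ^ 0 * peval l (cos e * cos t1)))).
    + rewrite (RInt_uniqR _ _ _ (2 * PI * (sin e * cos e) * weyl_inner l 0 (cos e)))
        by apply is_RInt_scalR, is_RInt_weyl_inner; ring.
    + intros t1; rewrite (RInt_uniqR _ _ _ ((2 * PI - 0) * (peval l (cos e * cos t1) * (sin e * cos e))))
        by apply is_RInt_constR; simpl; ring.
Qed.

Lemma is_RInt_cos_int_mult (z : Z) : is_RInt (fun t => cos (IZR z * t)) 0 (2 * PI)
  (if Z.eq_dec z 0 then 2 * PI else 0).
Proof.
  destruct (Z.eq_dec z 0) as [->|E].
  - eapply is_RInt_extR; [| | apply (is_RInt_constR 0 (2 * PI) 1)].
    + intros; rewrite Rmult_0_l, cos_0; auto.
    + simpl; ring.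
  - assert (Hz : IZR z <> 0) by (apply not_0_IZR; auto).
    eapply is_RInt_extR; [| | apply (is_RInt_deriveR (fun t => sin (IZR z * t) / IZR z)
      (fun t => cos (IZR z * t)))]; auto.
    + rewrite Rmult_0_r, sin_0, (sin_eq_0_1 (IZR z * (2 * PI))); [field; auto|].
      exists (2 * z)%Z; rewrite mult_IZR; simpl; ring.
    + intros x; auto_derive; auto; field; auto.
    + intros x; auto_derive; auto.
Qed.

Lemma cos_sin_sin_linearize n k t : cos (n * t) * sin (k * t) * sin t =
  / 4 * (cos ((n - k + 1) * t) + cos ((n + k - 1) * t)
         - cos ((n - k - 1) * t) - cos ((n + k + 1) * t)).
Proof.
  replace ((n - k + 1) * t) with (n * t - k * t + t) by ring.
  replace ((n + k - 1) * t) with (n * t + k * t - t) by ring.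
  replace ((n - k - 1) * t) with (n * t - k * t - t) by ring.
  replace ((n + k + 1) * t) with (n * t + k * t + t) by ring.
  unfold Rminus; repeat rewrite ?cos_plus, ?sin_plus, ?cos_neg, ?sin_neg; field.
Qed.

Lemma is_RInt_cos_sin_sin (N k : nat) : (1 <= k <= N)%nat ->
  is_RInt (fun t => cos (INR N * t) * sin (INR k * t) * sin t) 0 (2 * PI)
    (if Nat.eq_dec (k + 1) N then - (PI / 2) else 0).
Proof.
  intros Hk.
  set (a := (Z.of_nat N - Z.of_nat k + 1)%Z); set (b := (Z.of_nat N + Z.of_nat k - 1)%Z).
  set (c := (Z.of_nat N - Z.of_nat k - 1)%Z); set (d := (Z.of_nat N + Z.of_nat k + 1)%Z).
  eapply is_RInt_extR; [| | exact (is_RInt_scalR _ _ _ (/ 4) _ (is_RInt_minusR _ _ _ _ _ _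
    (is_RInt_minusR _ _ _ _ _ _ (is_RInt_plusR _ _ _ _ _ _
      (is_RInt_cos_int_mult a) (is_RInt_cos_int_mult b)) (is_RInt_cos_int_mult c))
    (is_RInt_cos_int_mult d)))].
  - intros y; rewrite cos_sin_sin_linearize.
    unfold a, b, c, d; repeat rewrite ?plus_IZR, ?minus_IZR; rewrite <- !INR_IZR_INZ; auto.
  - destruct (Z.eq_dec a 0); [unfold a in *; lia|].
    destruct (Z.eq_dec b 0); [unfold b in *; lia|].
    destruct (Z.eq_dec d 0); [unfold d in *; lia|].
    destruct (Z.eq_dec c 0), (Nat.eq_dec (k + 1) N); unfold c in *; try lia; field.
Qed.

Lemma sum_weighted_kronecker j c :
  sum_f_R0 (fun n => INR (n + 1) * (if Nat.eq_dec (n + 1 + 1) (j + 2) then c else 0)) (S j)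
  = INR (j + 1) * c.
Proof.
  rewrite tech5; destruct (Nat.eq_dec (S j + 1 + 1) (j + 2)); [lia|].
  destruct j as [|j].
  - simpl; destruct (Nat.eq_dec (0 + 1 + 1) (0 + 2)); [simpl; ring | lia].
  - rewrite tech5; destruct (Nat.eq_dec (S j + 1 + 1) (S j + 2)); [|lia].
    rewrite sum_eq_R0; [ring|]; intros m Hm.
    destruct (Nat.eq_dec (m + 1 + 1) (S j + 2)); [lia | ring].
Qed.

Definition hump (A : R) (N : nat) (x z : SU2) : R :=
  A * cos (INR N * acos (su2_re (su2_mul (su2_inv x) z))).

Lemma hump_conv_re A N M x y :
  hump A N x (su2_mul x (su2_inv y)) * dirichlet M y
  = A * cheb_T N (su2_re y) * dirichlet_poly M (su2_re y).
Proof.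
  unfold hump; rewrite su2_re_inv_mulK, su2_re_inv, dirichlet_re, <- cheb_T_cos.
  rewrite cos_acos by apply su2_re_bound; ring.
Qed.

Lemma cheb_T_dirichlet_cos N M t :
  cheb_T N (cos t) * dirichlet_poly M (cos t) * sin t ^ 2
  = sum_f_R0 (fun n => INR (n + 1) * (cos (INR N * t) * sin (INR (n + 1) * t) * sin t)) M.
Proof.
  unfold dirichlet_poly; rewrite cheb_T_cos.
  induction M as [|M IH]; cbn [sum_f_R0]; rewrite <- ?IH, Nat.add_1_r, <- cheb_U_cos; ring.
Qed.

(* Only chi_(N-2) pairs nontrivially with cos (N theta). *)
Lemma partial_sum_hump A N x : (2 <= N)%nat ->
  partial_sum (N - 1) (hump A N x) x = - A * INR (N - 1) / 2.
Proof.
  intros HN.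
  destruct (is_poly_mult _ _ (is_poly_scal A _ (is_poly_cheb_T N)) (is_poly_dirichlet (N - 1)))
    as [l Hl].
  unfold partial_sum.
  rewrite (f_equal haar_int (functional_extensionality _ (fun y => peval l (su2_re y))
    (fun y => eq_trans (hump_conv_re A N (N - 1) x y) (Hl (su2_re y))))).
  rewrite haar_int_peval_re.
  rewrite (RInt_extR _ (fun t => A * sum_f_R0 (fun n => INR (n + 1) *
    (cos (INR N * t) * sin (INR (n + 1) * t) * sin t)) (N - 1))).
  2:{ intros t; rewrite <- Hl, <- cheb_T_dirichlet_cos; ring. }
  rewrite (RInt_uniqR _ _ _ (A * sum_f_R0 (fun n => INR (n + 1) *
    (if Nat.eq_dec (n + 1 + 1) N then - (PI / 2) else 0)) (N - 1))).
  - destruct N as [|[|j]]; [lia | lia |].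
    replace (S (S j) - 1)%nat with (S j) by lia; replace (S (S j)) with (j + 2)%nat by lia.
    rewrite sum_weighted_kronecker, Nat.add_1_r; pose proof PI_RGT_0; field; lra.
  - apply is_RInt_scalR, is_RInt_sumR; intros n Hn.
    apply (is_RInt_scalR (fun t => cos (INR N * t) * sin (INR (n + 1) * t) * sin t)).
    apply is_RInt_cos_sin_sin; lia.
Qed.

(** * Hoelder estimates for humps *)

Lemma exp_le_mono x y : x <= y -> exp x <= exp y.
Proof. intros [H|<-]; [left; apply exp_increasing; auto | right; auto]. Qed.

Lemma Rpower_pos x y : 0 < Rpower x y.
Proof. apply exp_pos. Qed.

Lemma Rmin_1_le_Rpower t a : 0 < t -> 0 <= a <= 1 -> Rmin 1 t <= Rpower t a.
Proof.
  intros Ht Ha; unfold Rpower; destruct (Rle_dec t 1) as [H1|H1].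
  - assert (ln t <= 0).
    { rewrite <- ln_1; destruct H1 as [H1|H1]; [left; apply ln_increasing | rewrite H1]; lra. }
    rewrite Rmin_right by lra; rewrite <- (exp_ln t) at 1 by lra; apply exp_le_mono; nra.
  - assert (0 <= ln t) by (rewrite <- ln_1; left; apply ln_increasing; lra).
    rewrite Rmin_left by lra; rewrite <- exp_0; apply exp_le_mono; nra.
Qed.

Lemma Rabs_cos_sub_le a b : Rabs (cos a - cos b) <= Rabs (a - b).
Proof.
  destruct (MVT_abs cos (fun c => - sin c) b a) as [c [Hc _]];
    [intros; apply derivable_pt_lim_cos|].
  rewrite Hc, Rabs_Ropp; assert (Rabs (sin c) <= 1) by (apply Rabs_le, SIN_bound).
  pose proof (Rabs_pos (a - b)); nra.
Qed.

Lemma Rabs_sin_sub_le a b : Rabs (sin a - sin b) <= Rabs (a - b).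
Proof.
  destruct (MVT_abs sin cos b a) as [c [Hc _]]; [intros; apply derivable_pt_lim_sin|].
  rewrite Hc; assert (Rabs (cos c) <= 1) by (apply Rabs_le, COS_bound).
  pose proof (Rabs_pos (a - b)); nra.
Qed.

Lemma sin_ge_third u : 0 <= u <= PI / 2 -> u / 3 <= sin u.
Proof.
  intros Hu; pose proof PI_4; destruct (sin_bound u 0 ltac:(lra) ltac:(lra)) as [Hs _].
  unfold sin_approx, sin_term in Hs; simpl in Hs.
  apply Rle_trans with (u - u * u * u / 6); [nra|].
  eapply Rle_trans; [|exact Hs]; right; field.
Qed.

Lemma chord_sq t t' :
  (cos t - cos t') ^ 2 + (sin t - sin t') ^ 2 = 4 * sin (Rabs (t - t') / 2) ^ 2.
Proof.
  replace ((cos t - cos t') ^ 2 + (sin t - sin t') ^ 2) with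
    (2 - 2 * (cos t * cos t' + sin t * sin t'))
    by (pose proof (sin2_cos2 t); pose proof (sin2_cos2 t'); unfold Rsqr in *; nra).
  rewrite <- cos_minus.
  replace (cos (t - t')) with (cos (2 * (Rabs (t - t') / 2))).
  - rewrite cos_2a_sin; ring.
  - replace (2 * (Rabs (t - t') / 2)) with (Rabs (t - t')) by field.
    destruct (Rcase_abs (t - t')); [rewrite Rabs_left, cos_neg | rewrite Rabs_right]; auto.
Qed.

Lemma sqrt_norm3_sub_sq q1 q2 q3 r1 r2 r3 :
  (sqrt (q1 ^ 2 + q2 ^ 2 + q3 ^ 2) - sqrt (r1 ^ 2 + r2 ^ 2 + r3 ^ 2)) ^ 2
  <= (q1 - r1) ^ 2 + (q2 - r2) ^ 2 + (q3 - r3) ^ 2.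
Proof.
  set (A := q1 ^ 2 + q2 ^ 2 + q3 ^ 2); set (B := r1 ^ 2 + r2 ^ 2 + r3 ^ 2).
  assert (HA : 0 <= A) by (unfold A; nra); assert (HB : 0 <= B) by (unfold B; nra).
  pose proof (sqrt_sqrt A HA); pose proof (sqrt_sqrt B HB).
  pose proof (sqrt_pos A); pose proof (sqrt_pos B).
  assert (CS : (q1 * r1 + q2 * r2 + q3 * r3) ^ 2 <= A * B).
  { assert (A * B - (q1 * r1 + q2 * r2 + q3 * r3) ^ 2 =
      (q1 * r2 - q2 * r1) ^ 2 + (q1 * r3 - q3 * r1) ^ 2 + (q2 * r3 - q3 * r2) ^ 2)
      by (unfold A, B; ring).
    pose proof (pow2_ge_0 (q1 * r2 - q2 * r1)); pose proof (pow2_ge_0 (q1 * r3 - q3 * r1)).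
    pose proof (pow2_ge_0 (q2 * r3 - q3 * r2)); lra. }
  assert (q1 * r1 + q2 * r2 + q3 * r3 <= sqrt A * sqrt B).
  { destruct (Rle_or_lt (q1 * r1 + q2 * r2 + q3 * r3) 0); [nra|].
    apply Rsqr_incr_0_var; [|nra]; unfold Rsqr.
    rewrite <- (sqrt_sqrt (A * B)), sqrt_mult in CS by nra; nra. }
  apply Rle_trans with (A + B - 2 * (q1 * r1 + q2 * r2 + q3 * r3)); [nra|].
  unfold A, B; right; ring.
Qed.

(* (cos t, sin t) is (Re a, norm of the other three coordinates), so the reverse triangle
   inequality in R^3 bounds the chord. *)
Lemma su2_angle_chord_le (w w' : SU2) :
  let t := acos (su2_re w) in let t' := acos (su2_re w') in
  (cos t - cos t') ^ 2 + (sin t - sin t') ^ 2 <= su2_dist w w' ^ 2.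
Proof.
  intros t t'.
  pose proof (su2_re_bound w) as Hw; pose proof (su2_re_bound w') as Hw'.
  pose proof (su2_coords_unit w); pose proof (su2_coords_unit w').
  assert (St : sin t = sqrt (snd (su_a w) ^ 2 + fst (su_b w) ^ 2 + snd (su_b w) ^ 2))
    by (unfold t; rewrite sin_acos by auto; f_equal; unfold Rsqr; lra).
  assert (St' : sin t' = sqrt (snd (su_a w') ^ 2 + fst (su_b w') ^ 2 + snd (su_b w') ^ 2))
    by (unfold t'; rewrite sin_acos by auto; f_equal; unfold Rsqr; lra).
  rewrite St, St'; unfold t, t'; rewrite !cos_acos, su2_dist_coords by auto.
  rewrite pow2_sqrt.
  - pose proof (sqrt_norm3_sub_sq (snd (su_a w)) (fst (su_b w)) (snd (su_b w))
      (snd (su_a w')) (fst (su_b w')) (snd (su_b w'))); lra.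
  - pose proof (pow2_ge_0 (su2_re w - su2_re w')).
    pose proof (pow2_ge_0 (snd (su_a w) - snd (su_a w'))).
    pose proof (pow2_ge_0 (fst (su_b w) - fst (su_b w'))).
    pose proof (pow2_ge_0 (snd (su_b w) - snd (su_b w'))); lra.
Qed.

Lemma su2_angle_lipschitz (w w' : SU2) :
  Rabs (acos (su2_re w) - acos (su2_re w')) <= 3 * su2_dist w w'.
Proof.
  pose proof (su2_angle_chord_le w w') as Hc; cbv zeta in Hc; rewrite chord_sq in Hc.
  set (t := acos (su2_re w)) in *; set (t' := acos (su2_re w')) in *.
  pose proof (acos_bound (su2_re w)); pose proof (acos_bound (su2_re w')).
  assert (Hu : 0 <= Rabs (t - t') / 2 <= PI / 2).
  { pose proof (Rabs_pos (t - t')); assert (Rabs (t - t') <= PI) by (apply Rabs_le; unfold t, t'; lra).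
    lra. }
  pose proof (sin_ge_third _ Hu); pose proof (su2_dist_ge0 w w').
  assert (Rabs (t - t') / 3 <= su2_dist w w'); [|lra].
  apply Rsqr_incr_0_var; [unfold Rsqr | auto]; pose proof (Rabs_pos (t - t')); nra.
Qed.

Lemma Rabs_hump_le A N x z : Rabs (hump A N x z) <= Rabs A.
Proof.
  unfold hump; rewrite Rabs_mult.
  assert (Rabs (cos (INR N * acos (su2_re (su2_mul (su2_inv x) z)))) <= 1)
    by (apply Rabs_le, COS_bound).
  pose proof (Rabs_pos A); nra.
Qed.

Lemma hump_lipschitz A N x z z' :
  Rabs (hump A N x z - hump A N x z') <= Rabs A * INR N * (3 * su2_dist z z').
Proof.
  unfold hump; rewrite <- Rmult_minus_distr_l, Rabs_mult, Rmult_assoc.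
  apply Rmult_le_compat_l; [apply Rabs_pos|].
  eapply Rle_trans; [apply Rabs_cos_sub_le|].
  rewrite <- Rmult_minus_distr_l, Rabs_mult, Rabs_right by (apply Rle_ge, pos_INR).
  apply Rmult_le_compat_l; [apply pos_INR|].
  rewrite <- (su2_dist_mul_l (su2_inv x) z z'); apply su2_angle_lipschitz.
Qed.

Lemma hpow_ge0 d alpha : 0 <= hpow d alpha.
Proof. unfold hpow; destruct (Req_EM_T d 0); [lra | left; apply Rpower_pos]. Qed.

Lemma hpow_le2 d alpha : 0 <= d <= 2 -> 0 < alpha < 1 -> hpow d alpha <= 2.
Proof.
  intros Hd Ha; unfold hpow; destruct (Req_EM_T d 0); [lra|].
  destruct (Rle_dec d 1) as [H1|H1].
  - apply Rle_trans with (Rpower 1 alpha); [apply Rle_Rpower_l; lra|].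
    unfold Rpower at 1; rewrite ln_1, Rmult_0_r, exp_0; lra.
  - apply Rle_trans with (Rpower d 1); [apply Rle_Rpower; lra | rewrite Rpower_1; lra].
Qed.

(* Interpolates between the Lipschitz bound |A| N d and the trivial bound 2 |A|. *)
Lemma hump_holder alpha A N x z z' : 0 < alpha < 1 -> (1 <= N)%nat ->
  Rabs (hump A N x z - hump A N x z')
  <= 3 * Rabs A * Rpower (INR N) alpha * hpow (su2_dist z z') alpha.
Proof.
  intros Ha HN.
  pose proof (hump_lipschitz A N x z z') as L.
  assert (L2 : Rabs (hump A N x z - hump A N x z') <= 2 * Rabs A).
  { eapply Rle_trans; [apply Rabs_triang|]; rewrite Rabs_Ropp.
    pose proof (Rabs_hump_le A N x z); pose proof (Rabs_hump_le A N x z'); lra. }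
  pose proof (Rabs_pos A); assert (HN1 : 1 <= INR N) by (apply (le_INR 1); auto).
  unfold hpow; destruct (Req_EM_T (su2_dist z z') 0) as [E|E].
  - rewrite E in L; rewrite Rmult_0_r; lra.
  - pose proof (su2_dist_ge0 z z'); set (d := su2_dist z z') in *.
    rewrite Rmult_assoc, Rpower_mult_distr by lra.
    pose proof (Rmin_1_le_Rpower (INR N * d) alpha ltac:(nra) ltac:(lra)).
    destruct (Rle_dec 1 (INR N * d)); [rewrite Rmin_left in * by lra | rewrite Rmin_right in * by lra];
      nra.
Qed.

Definition unif_cont (G : SU2 -> R) : Prop := forall eps, 0 < eps -> exists del, 0 < del /\
  forall z z', su2_dist z z' < del -> Rabs (G z - G z') < eps.

Definition bounded (G : SU2 -> R) : Prop := exists B, 0 <= B /\ forall z, Rabs (G z) <= B.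

Lemma Rdiv_mult_lt_half eps B : 0 < eps -> 0 <= B -> eps / (2 * (B + 1)) * B < eps / 2.
Proof.
  intros He HB; replace (eps / (2 * (B + 1)) * B) with (eps / 2 * (B / (B + 1))) by (field; lra).
  rewrite <- (Rmult_1_r (eps / 2)) at 2; apply Rmult_lt_compat_l; [lra|].
  apply Rmult_lt_reg_r with (B + 1); [lra|]; unfold Rdiv; rewrite Rmult_assoc, Rinv_l; lra.
Qed.

Lemma Rabs_mult_sub_le p q p' q' :
  Rabs (p * q - p' * q') <= Rabs p * Rabs (q - q') + Rabs q' * Rabs (p - p').
Proof.
  replace (p * q - p' * q') with (p * (q - q') + q' * (p - p')) by ring.
  rewrite <- !Rabs_mult; apply Rabs_triang.
Qed.

Lemma unif_cont_mult f g : unif_cont f -> unif_cont g -> bounded f -> bounded g ->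
  unif_cont (fun z => f z * g z).
Proof.
  intros Hf Hg [Bf [HBf Bf']] [Bg [HBg Bg']] eps Heps.
  destruct (Hf (eps / (2 * (Bg + 1)))) as [d1 [Hd1 H1]]; [apply Rdiv_lt_0_compat; lra|].
  destruct (Hg (eps / (2 * (Bf + 1)))) as [d2 [Hd2 H2]]; [apply Rdiv_lt_0_compat; lra|].
  exists (Rmin d1 d2); split; [apply Rmin_pos; auto|]; intros z z' Hz.
  specialize (H1 z z' (Rlt_le_trans _ _ _ Hz (Rmin_l _ _))).
  specialize (H2 z z' (Rlt_le_trans _ _ _ Hz (Rmin_r _ _))).
  eapply Rle_lt_trans; [apply Rabs_mult_sub_le|].
  pose proof (Bf' z); pose proof (Bg' z'); pose proof (Rabs_pos (f z - f z')).
  pose proof (Rabs_pos (g z - g z')); pose proof (Rabs_pos (f z)); pose proof (Rabs_pos (g z')).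
  pose proof (Rdiv_mult_lt_half eps Bg Heps HBg); pose proof (Rdiv_mult_lt_half eps Bf Heps HBf).
  nra.
Qed.

Lemma bounded_mult f g : bounded f -> bounded g -> bounded (fun z => f z * g z).
Proof.
  intros [Bf [HBf Bf']] [Bg [HBg Bg']]; exists (Bf * Bg); split; [nra|]; intros z.
  rewrite Rabs_mult; pose proof (Bf' z); pose proof (Bg' z).
  pose proof (Rabs_pos (f z)); pose proof (Rabs_pos (g z)); nra.
Qed.

Lemma unif_cont_mul_inv g x : unif_cont g -> unif_cont (fun y => g (su2_mul x (su2_inv y))).
Proof.
  intros H eps Heps; destruct (H eps Heps) as [d [Hd H']]; exists d; split; auto.
  intros z z' Hz; apply H'; rewrite su2_dist_mul_l, su2_dist_inv; auto.
Qed.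

Lemma bounded_mul_inv g x : bounded g -> bounded (fun y => g (su2_mul x (su2_inv y))).
Proof. intros [B [HB H]]; exists B; split; auto. Qed.

Lemma unif_cont_dirichlet N : unif_cont (dirichlet N).
Proof.
  destruct (is_poly_lipschitz _ (is_poly_dirichlet N)) as [K [HK H]].
  intros eps Heps; exists (eps / (K + 1)); split; [apply Rdiv_lt_0_compat; lra|].
  intros z z' Hz; rewrite !dirichlet_re.
  eapply Rle_lt_trans; [apply (H _ _ (su2_re_bound z) (su2_re_bound z'))|].
  pose proof (su2_re_dist z z'); pose proof (Rabs_pos (su2_re z - su2_re z')).
  apply Rle_lt_trans with ((K + 1) * Rabs (su2_re z - su2_re z')); [nra|].
  apply Rmult_lt_reg_r with (/ (K + 1)); [apply Rinv_0_lt_compat; lra|].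
  rewrite Rmult_comm, <- Rmult_assoc, Rinv_l, Rmult_1_l by lra; unfold Rdiv in Hz; lra.
Qed.

Lemma bounded_dirichlet N : bounded (dirichlet N).
Proof. exists (dirichlet_sup N); split; [apply dirichlet_sup_ge0 | apply Rabs_dirichlet_le]. Qed.

Lemma Lip_bounded alpha g : 0 < alpha < 1 -> Lip alpha g -> bounded g.
Proof.
  intros Ha [L [HL H]]; set (z0 := hopf 0 0 0); exists (Rabs (g z0) + 2 * L).
  split; [pose proof (Rabs_pos (g z0)); lra|]; intros z.
  specialize (H z z0); pose proof (hpow_ge0 (su2_dist z z0) alpha).
  pose proof (hpow_le2 (su2_dist z z0) alpha (conj (su2_dist_ge0 _ _) (su2_dist_le2 _ _)) Ha).
  replace (g z) with ((g z - g z0) + g z0) by ring.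
  eapply Rle_trans; [apply Rabs_triang|]; nra.
Qed.

Lemma Lip_unif_cont alpha g : 0 < alpha < 1 -> Lip alpha g -> unif_cont g.
Proof.
  intros Ha [L [HL H]] eps Heps; set (c := eps / (L + 1)).
  assert (Hc : 0 < c) by (apply Rdiv_lt_0_compat; lra).
  exists (Rpower c (/ alpha)); split; [apply Rpower_pos|]; intros z z' Hd.
  eapply Rle_lt_trans; [apply H|]; unfold hpow.
  destruct (Req_EM_T (su2_dist z z') 0); [lra|].
  assert (Rpower (su2_dist z z') alpha < c).
  { replace c with (Rpower (Rpower c (/ alpha)) alpha)
      by (rewrite Rpower_mult, Rinv_l, Rpower_1 by lra; auto).
    apply Rlt_Rpower_l; [lra|]; pose proof (su2_dist_ge0 z z'); lra. }
  assert (L * c < eps).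
  { unfold c; apply Rmult_lt_reg_r with (L + 1); [lra|].
    unfold Rdiv; rewrite Rmult_assoc, (Rmult_assoc eps), Rinv_l by lra; nra. }
  pose proof (Rpower_pos (su2_dist z z') alpha); nra.
Qed.

Lemma hopf_dist_le e t1 t2 e' t1' t2' : su2_dist (hopf e t1 t2) (hopf e' t1' t2')
  <= 2 * (Rabs (e - e') + Rabs (t1 - t1') + Rabs (t2 - t2')).
Proof.
  rewrite su2_dist_coords; unfold su2_re; cbn [hopf su_a su_b fst snd].
  set (S := Rabs (e - e') + Rabs (t1 - t1') + Rabs (t2 - t2')).
  pose proof (Rabs_pos (e - e')); pose proof (Rabs_pos (t1 - t1')); pose proof (Rabs_pos (t2 - t2')).
  assert (Hsq : forall (f g : R -> R) a a' b b',
    (forall x, Rabs (f x) <= 1) -> (forall x, Rabs (g x) <= 1) ->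
    (forall x y, Rabs (f x - f y) <= Rabs (x - y)) -> (forall x y, Rabs (g x - g y) <= Rabs (x - y)) ->
    Rabs (a - a') + Rabs (b - b') <= S -> (f a * g b - f a' * g b') ^ 2 <= S ^ 2).
  { intros f g a a' b b' Bf Bg Lf Lg Hab.
    rewrite <- !Rsqr_pow2, Rsqr_abs; apply Rsqr_incr_1; [| apply Rabs_pos | unfold S; lra].
    eapply Rle_trans; [apply Rabs_mult_sub_le|].
    pose proof (Lf a a'); pose proof (Lg b b'); pose proof (Bf a); pose proof (Bg b').
    pose proof (Rabs_pos (f a - f a')); pose proof (Rabs_pos (g b - g b')); nra. }
  assert (Bc : forall x, Rabs (cos x) <= 1) by (intro; apply Rabs_le, COS_bound).
  assert (Bs : forall x, Rabs (sin x) <= 1) by (intro; apply Rabs_le, SIN_bound).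
  pose proof (Hsq cos cos e e' t1 t1' Bc Bc Rabs_cos_sub_le Rabs_cos_sub_le ltac:(unfold S; lra)).
  pose proof (Hsq cos sin e e' t1 t1' Bc Bs Rabs_cos_sub_le Rabs_sin_sub_le ltac:(unfold S; lra)).
  pose proof (Hsq sin cos e e' t2 t2' Bs Bc Rabs_sin_sub_le Rabs_cos_sub_le ltac:(unfold S; lra)).
  pose proof (Hsq sin sin e e' t2 t2' Bs Bs Rabs_sin_sub_le Rabs_sin_sub_le ltac:(unfold S; lra)).
  rewrite <- (sqrt_square (2 * S)) by (unfold S; lra); apply sqrt_le_1_alt; nra.
Qed.

Definition unif_cont_R (g : R -> R) : Prop := forall eps, 0 < eps -> exists del, 0 < del /\
  forall x y, Rabs (x - y) < del -> Rabs (g x - g y) < eps.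

Lemma ex_RInt_unif_cont_R (g : R -> R) a b : unif_cont_R g -> ex_RInt g a b.
Proof.
  intros H; apply (@ex_RInt_continuous R_CompleteNormedModule); intros z _.
  apply continuity_pt_filterlim; intros eps Heps.
  destruct (H eps Heps) as [d [Hd H']]; exists d; split; [lra|].
  intros y [_ Hy]; apply H'; auto.
Qed.

Lemma Rabs_RInt_sub_le (f g : R -> R) a b eps : a <= b -> ex_RInt f a b -> ex_RInt g a b ->
  (forall x, Rabs (f x - g x) < eps) -> Rabs (RInt f a b - RInt g a b) <= (b - a) * eps.
Proof.
  intros Hab Hf Hg H; rewrite <- (@RInt_minus R_CompleteNormedModule) by auto.
  apply abs_RInt_le_const; auto; [apply (@ex_RInt_minus R_NormedModule); auto|].
  intros; left; auto.
Qed.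

Definition unif_cont3 (F : R -> R -> R -> R) : Prop := forall eps, 0 < eps -> exists del, 0 < del /\
  forall e e' t1 t1' t2 t2', Rabs (e - e') < del -> Rabs (t1 - t1') < del ->
  Rabs (t2 - t2') < del -> Rabs (F e t1 t2 - F e' t1' t2') < eps.

Definition hopf_density (G : SU2 -> R) (e t1 t2 : R) : R := G (hopf e t1 t2) * (sin e * cos e).

Lemma Rabs_sin_cos_sub_le e e' : Rabs (sin e * cos e - sin e' * cos e') <= 2 * Rabs (e - e').
Proof.
  eapply Rle_trans; [apply Rabs_mult_sub_le|].
  pose proof (Rabs_cos_sub_le e e'); pose proof (Rabs_sin_sub_le e e').
  pose proof (Rabs_pos (cos e - cos e')); pose proof (Rabs_pos (sin e - sin e')).
  assert (Rabs (sin e) <= 1) by (apply Rabs_le, SIN_bound).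
  assert (Rabs (cos e') <= 1) by (apply Rabs_le, COS_bound); nra.
Qed.

Lemma Rabs_sin_cos_le e : Rabs (sin e * cos e) <= 1.
Proof.
  rewrite Rabs_mult; assert (Rabs (sin e) <= 1) by (apply Rabs_le, SIN_bound).
  assert (Rabs (cos e) <= 1) by (apply Rabs_le, COS_bound).
  pose proof (Rabs_pos (sin e)); pose proof (Rabs_pos (cos e)); nra.
Qed.

Lemma unif_cont3_hopf_density G : unif_cont G -> bounded G -> unif_cont3 (hopf_density G).
Proof.
  intros HU [B [HB HB']] eps Heps.
  destruct (HU (eps / 2)) as [d1 [Hd1 H1]]; [lra|].
  set (d2 := eps / (2 * (B + 1)) / 2).
  assert (Hd2 : 0 < d2) by (unfold d2; apply Rdiv_lt_0_compat; [apply Rdiv_lt_0_compat|]; lra).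
  exists (Rmin (d1 / 7) d2); split; [apply Rmin_pos; lra|].
  intros e e' t1 t1' t2 t2' He Ht1 Ht2.
  pose proof (Rmin_l (d1 / 7) d2); pose proof (Rmin_r (d1 / 7) d2).
  pose proof (hopf_dist_le e t1 t2 e' t1' t2').
  assert (Hg : Rabs (G (hopf e t1 t2) - G (hopf e' t1' t2')) < eps / 2) by (apply H1; lra).
  pose proof (Rabs_sin_cos_sub_le e e'); pose proof (Rabs_sin_cos_le e').
  pose proof (HB' (hopf e t1 t2)).
  pose proof (Rdiv_mult_lt_half eps B Heps HB).
  pose proof (Rabs_pos (sin e * cos e - sin e' * cos e')); pose proof (Rabs_pos (G (hopf e t1 t2))).
  pose proof (Rabs_pos (G (hopf e t1 t2) - G (hopf e' t1' t2'))).
  unfold hopf_density; eapply Rle_lt_trans; [apply Rabs_mult_sub_le|]; unfold d2 in *; nra.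
Qed.

Definition hopf_int2 (F : R -> R -> R -> R) (e t1 : R) : R := RInt (fun t2 => F e t1 t2) 0 (2 * PI).
Definition hopf_int1 (F : R -> R -> R -> R) (e : R) : R := RInt (fun t1 => hopf_int2 F e t1) 0 (2 * PI).

Lemma haar_int_hopf (G : SU2 -> R) :
  haar_int G = / (2 * PI ^ 2) * RInt (hopf_int1 (hopf_density G)) 0 (PI / 2).
Proof. reflexivity. Qed.

Section IteratedIntegrals.

Variable F : R -> R -> R -> R.
Hypothesis HF : unif_cont3 F.

Lemma ex_RInt_unif_cont3 e t1 : ex_RInt (fun t2 => F e t1 t2) 0 (2 * PI).
Proof.
  apply ex_RInt_unif_cont_R; intros eps Heps; destruct (HF eps Heps) as [d [Hd H]].
  exists d; split; auto; intros y y' Hy; apply H; rewrite ?Rminus_eq_0, ?Rabs_R0; auto.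
Qed.

Lemma hopf_int2_unif_cont eps : 0 < eps -> exists del, 0 < del /\
  forall e e' t1 t1', Rabs (e - e') < del -> Rabs (t1 - t1') < del ->
  Rabs (hopf_int2 F e t1 - hopf_int2 F e' t1') < eps.
Proof.
  intros Heps; pose proof PI_RGT_0 as Hpi; destruct (HF (eps / (2 * (2 * PI)))) as [d [Hd H]].
  { apply Rdiv_lt_0_compat; lra. }
  exists d; split; auto; intros e e' t1 t1' He Ht; unfold hopf_int2.
  eapply Rle_lt_trans;
    [apply Rabs_RInt_sub_le; [lra | apply ex_RInt_unif_cont3 | apply ex_RInt_unif_cont3 |]|].
  - intros x; apply H; rewrite ?Rminus_eq_0, ?Rabs_R0; auto.
  - replace ((2 * PI - 0) * (eps / (2 * (2 * PI)))) with (eps / 2) by (field; lra); lra.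
Qed.

Lemma ex_RInt_hopf_int2 e : ex_RInt (hopf_int2 F e) 0 (2 * PI).
Proof.
  apply ex_RInt_unif_cont_R; intros eps Heps; destruct (hopf_int2_unif_cont eps Heps) as [d [Hd H]].
  exists d; split; auto; intros y y' Hy; apply H; rewrite ?Rminus_eq_0, ?Rabs_R0; auto.
Qed.

Lemma ex_RInt_hopf_int1 : ex_RInt (hopf_int1 F) 0 (PI / 2).
Proof.
  apply ex_RInt_unif_cont_R; intros eps Heps; pose proof PI_RGT_0 as Hpi.
  destruct (hopf_int2_unif_cont (eps / (2 * (2 * PI)))) as [d [Hd H]].
  { apply Rdiv_lt_0_compat; lra. }
  exists d; split; auto; intros y y' Hy; unfold hopf_int1.
  eapply Rle_lt_trans;
    [apply Rabs_RInt_sub_le; [lra | apply ex_RInt_hopf_int2 | apply ex_RInt_hopf_int2 |]|].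
  - intros t; apply H; rewrite ?Rminus_eq_0, ?Rabs_R0; auto.
  - replace ((2 * PI - 0) * (eps / (2 * (2 * PI)))) with (eps / 2) by (field; lra); lra.
Qed.

End IteratedIntegrals.

Lemma RInt_plusR (f g : R -> R) a b : ex_RInt f a b -> ex_RInt g a b ->
  RInt (fun x => f x + g x) a b = RInt f a b + RInt g a b.
Proof. apply (@RInt_plus R_CompleteNormedModule). Qed.

Lemma haar_int_plus G1 G2 : unif_cont G1 -> bounded G1 -> unif_cont G2 -> bounded G2 ->
  haar_int (fun y => G1 y + G2 y) = haar_int G1 + haar_int G2.
Proof.
  intros U1 B1 U2 B2.
  pose proof (unif_cont3_hopf_density G1 U1 B1) as P1.
  pose proof (unif_cont3_hopf_density G2 U2 B2) as P2.
  rewrite !haar_int_hopf, <- Rmult_plus_distr_l; f_equal.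
  rewrite <- (RInt_plusR) by (apply ex_RInt_hopf_int1; auto).
  apply RInt_extR; intros e; unfold hopf_int1.
  rewrite <- (RInt_plusR) by (apply ex_RInt_hopf_int2; auto).
  apply RInt_extR; intros t1; unfold hopf_int2.
  rewrite <- (RInt_plusR) by (apply ex_RInt_unif_cont3; auto).
  apply RInt_extR; intros t2; unfold hopf_density; ring.
Qed.

(* A crude bound: sin e cos e is bounded by 1 instead of being integrated. *)
Lemma Rabs_haar_int_le G s : unif_cont G -> bounded G -> (forall y, Rabs (G y) <= s) ->
  Rabs (haar_int G) <= PI * s.
Proof.
  intros U B Hs; pose proof (unif_cont3_hopf_density G U B) as P; pose proof PI_RGT_0.
  assert (Hs0 : 0 <= s) by (eapply Rle_trans; [apply Rabs_pos | apply (Hs (hopf 0 0 0))]).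
  assert (A2 : forall e t1, Rabs (hopf_int2 (hopf_density G) e t1) <= 2 * PI * s).
  { intros e t1; eapply Rle_trans; [apply abs_RInt_le_const with (M := s);
      [lra | apply ex_RInt_unif_cont3; auto |] | lra].
    intros t _; unfold hopf_density; rewrite Rabs_mult.
    pose proof (Rabs_sin_cos_le e); pose proof (Hs (hopf e t1 t));
      pose proof (Rabs_pos (G (hopf e t1 t))).
    pose proof (Rabs_pos (sin e * cos e)); nra. }
  assert (A1 : Rabs (RInt (hopf_int1 (hopf_density G)) 0 (PI / 2)) <= PI / 2 * (2 * PI * (2 * PI * s))).
  { eapply Rle_trans; [apply abs_RInt_le_const with (M := 2 * PI * (2 * PI * s));
      [lra | apply ex_RInt_hopf_int1; auto |] | lra].
    intros e _; eapply Rle_trans; [apply abs_RInt_le_const with (M := 2 * PI * s);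
      [lra | apply ex_RInt_hopf_int2; auto | intros; apply A2] | lra]. }
  rewrite haar_int_hopf, Rabs_mult, Rabs_right by (apply Rle_ge, Rlt_le, Rinv_0_lt_compat; nra).
  apply Rmult_le_reg_l with (2 * PI ^ 2); [nra|].
  rewrite <- Rmult_assoc, Rinv_r, Rmult_1_l by nra.
  eapply Rle_trans; [exact A1 | right; field].
Qed.

Lemma Lip_plus alpha f g : Lip alpha f -> Lip alpha g -> Lip alpha (fun z => f z + g z).
Proof.
  intros [L1 [H1 F1]] [L2 [H2 F2]]; exists (L1 + L2); split; [lra|]; intros z z'.
  replace (f z + g z - (f z' + g z')) with ((f z - f z') + (g z - g z')) by ring.
  eapply Rle_trans; [apply Rabs_triang|]; pose proof (F1 z z'); pose proof (F2 z z'); lra.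
Qed.

Lemma Lip_minus alpha f g : Lip alpha f -> Lip alpha g -> Lip alpha (fun z => f z - g z).
Proof.
  intros [L1 [H1 F1]] [L2 [H2 F2]]; exists (L1 + L2); split; [lra|]; intros z z'.
  replace (f z - g z - (f z' - g z')) with ((f z - f z') - (g z - g z')) by ring.
  eapply Rle_trans; [apply Rabs_triang|]; rewrite Rabs_Ropp.
  pose proof (F1 z z'); pose proof (F2 z z'); lra.
Qed.

Lemma Lip_const alpha c : Lip alpha (fun _ => c).
Proof. exists 0; split; [lra|]; intros; rewrite Rminus_eq_0, Rabs_R0; lra. Qed.

Section PartialSums.

Variable alpha : R.
Hypothesis Halpha : 0 < alpha < 1.

Lemma partial_sum_integrand_regular g N x : Lip alpha g ->
  unif_cont (fun y => g (su2_mul x (su2_inv y)) * dirichlet N y) /\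
  bounded (fun y => g (su2_mul x (su2_inv y)) * dirichlet N y).
Proof.
  intros H; pose proof (Lip_unif_cont alpha g Halpha H); pose proof (Lip_bounded alpha g Halpha H).
  split; [apply unif_cont_mult | apply bounded_mult];
    auto using unif_cont_mul_inv, bounded_mul_inv, unif_cont_dirichlet, bounded_dirichlet.
Qed.

Lemma partial_sum_plus g1 g2 N x : Lip alpha g1 -> Lip alpha g2 ->
  partial_sum N (fun z => g1 z + g2 z) x = partial_sum N g1 x + partial_sum N g2 x.
Proof.
  intros H1 H2; destruct (partial_sum_integrand_regular g1 N x H1) as [U1 B1].
  destruct (partial_sum_integrand_regular g2 N x H2) as [U2 B2].
  unfold partial_sum; rewrite <- haar_int_plus by auto.
  f_equal; apply functional_extensionality; intro y; ring.
Qed.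

Lemma Rabs_partial_sum_le g N x s : Lip alpha g -> (forall z, Rabs (g z) <= s) ->
  Rabs (partial_sum N g x) <= PI * (s * dirichlet_sup N).
Proof.
  intros H Hs; destruct (partial_sum_integrand_regular g N x H) as [U B].
  apply Rabs_haar_int_le; auto; intros y; rewrite Rabs_mult.
  pose proof (Hs (su2_mul x (su2_inv y))); pose proof (Rabs_dirichlet_le N y).
  pose proof (Rabs_pos (g (su2_mul x (su2_inv y)))); pose proof (Rabs_pos (dirichlet N y)); nra.
Qed.

(* Possible because N^(1 - alpha) and N^alpha both tend to infinity. *)
Lemma exists_large_freq K : 0 <= K -> exists N : nat, (2 <= N)%nat /\
  K <= INR (N - 1) * Rpower (INR N) (- alpha) /\ K * Rpower (INR N) (- alpha) <= 1.
Proof.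
  intros HK.
  pose proof (Rpower_pos (2 * K + 2) (/ (1 - alpha))); pose proof (Rpower_pos (K + 1) (/ alpha)).
  set (a := Rpower (2 * K + 2) (/ (1 - alpha))) in *; set (b := Rpower (K + 1) (/ alpha)) in *.
  destruct (INR_unbounded (a + b + 2)) as [N HN]; exists N.
  assert (H2 : (2 < N)%nat) by (apply INR_lt; simpl; lra).
  set (X := INR N) in *; split; [lia|].
  assert (P1 : 2 * K + 2 <= Rpower X (1 - alpha)).
  { replace (2 * K + 2) with (Rpower a (1 - alpha))
      by (unfold a; rewrite Rpower_mult, Rinv_l, Rpower_1 by lra; auto).
    apply Rle_Rpower_l; lra. }
  assert (P2 : K + 1 <= Rpower X alpha).
  { replace (K + 1) with (Rpower b alpha)
      by (unfold b; rewrite Rpower_mult, Rinv_l, Rpower_1 by lra; auto).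
    apply Rle_Rpower_l; lra. }
  assert (HX : 0 < X) by (lra).
  assert (E1 : X * Rpower X (- alpha) = Rpower X (1 - alpha))
    by (rewrite <- (Rpower_1 X) at 1 by auto; rewrite <- Rpower_plus; f_equal; ring).
  assert (E2 : INR (N - 1) = X - 1) by (rewrite minus_INR by lia; auto).
  pose proof (Rpower_pos X (- alpha)); pose proof (Rpower_pos X alpha); split.
  - rewrite E2; nra.
  - rewrite Rpower_Ropp; apply Rmult_le_reg_r with (Rpower X alpha); auto.
    rewrite Rmult_assoc, Rinv_l by lra; lra.
Qed.

End PartialSums.

(** * The gliding-hump construction *)

Lemma Rabs_le_signed_sum v w :
  Rabs w <= Rabs (v + (if Rle_dec (Rabs w) (Rabs (v + w)) then 1 else -1) * w).
Proof.
  destruct (Rle_dec _ _) as [H|H]; [rewrite Rmult_1_l; auto|].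
  assert (A : Rabs (2 * w) <= Rabs (v + -1 * w) + Rabs (v + w)).
  { replace (2 * w) with (- (v + -1 * w) + (v + w)) by ring.
    eapply Rle_trans; [apply Rabs_triang | rewrite Rabs_Ropp; lra]. }
  rewrite Rabs_mult, (Rabs_right 2) in A by lra; lra.
Qed.

Lemma ex_series_geom_half : ex_series (fun n => (/ 2) ^ n).
Proof. exists (/ (1 - / 2)); apply is_series_geom; rewrite Rabs_right; lra. Qed.

Lemma Series_geom_half : Series (fun n => (/ 2) ^ n) = 2.
Proof.
  rewrite (is_series_unique _ (/ (1 - / 2))); [field|].
  apply is_series_geom; rewrite Rabs_right; lra.
Qed.

Lemma ex_series_le_geom_half (a : nat -> R) c :
  (forall n, Rabs (a n) <= c * (/ 2) ^ n) -> ex_series (fun n => Rabs (a n)).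
Proof.
  intros H; apply (@ex_series_le R_AbsRing R_CompleteNormedModule) with (fun n => c * (/ 2) ^ n).
  - intros n; change norm with Rabs; rewrite Rabs_Rabsolu; auto.
  - apply (@ex_series_scal_l R_AbsRing R_NormedModule), ex_series_geom_half.
Qed.

Lemma Rabs_Series_le_geom_half (a : nat -> R) c :
  (forall n, Rabs (a n) <= c * (/ 2) ^ n) -> Rabs (Series a) <= 2 * c.
Proof.
  intros H; pose proof (ex_series_le_geom_half a c H) as Ea.
  eapply Rle_trans; [apply Series_Rabs; auto|].
  eapply Rle_trans; [apply Series_le; [intros n; split; [apply Rabs_pos | apply H] |]|].
  - apply (@ex_series_scal_l R_AbsRing R_NormedModule), ex_series_geom_half.
  - rewrite (Series_scal_l c (fun n => (/ 2) ^ n)), Series_geom_half; lra.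
Qed.

Section Construction.

Variable alpha : R.
Hypothesis Halpha : 0 < alpha < 1.
Variable xs : nat -> SU2.

Definition large_freq (K : R) : nat :=
  match Rle_dec 0 K with
  | left HK => proj1_sig (constructive_indefinite_description _ (exists_large_freq alpha Halpha K HK))
  | right _ => 2%nat
  end.

Lemma large_freq_spec K : 0 <= K -> (2 <= large_freq K)%nat /\
  K <= INR (large_freq K - 1) * Rpower (INR (large_freq K)) (- alpha) /\
  K * Rpower (INR (large_freq K)) (- alpha) <= 1.
Proof.
  intros HK; unfold large_freq; destruct (Rle_dec 0 K); [|lra].
  destruct (constructive_indefinite_description _ _) as [N HN]; auto.
Qed.

(* Every index is targeted infinitely often, since Cantor.of_nat is onto. *)
Definition target (k : nat) : nat := fst (Cantor.of_nat k).

Definition amplitude (k N : nat) : R := (/ 2) ^ k * Rpower (INR N) (- alpha).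

(* Makes the partial sum of the k-th hump, 2^-k (N - 1) N^-alpha / 2, at least k + 1, and
   its amplitude at most 2^-k / B. *)
Definition next_freq (k : nat) (B : R) : nat := large_freq (Rmax (2 ^ S k * INR (S k)) B).

(* stage k = (sum of the first k humps, B_k), where B_k exceeds PI sup |D_(N_j - 1)| for all
   earlier frequencies N_j; the k-th hump has sup norm at most 2^-k / B_k. *)
Fixpoint stage (k : nat) : (SU2 -> R) * R :=
  match k with
  | O => (fun _ => 0, 1)
  | S k' =>
    let p := stage k' in
    let N := next_freq k' (snd p) in
    let x := xs (target k') in
    let w := partial_sum (N - 1) (hump (amplitude k' N) N x) x in
    let v := partial_sum (N - 1) (fst p) x in
    let e := if Rle_dec (Rabs w) (Rabs (v + w)) then 1 else -1 in
    (fun z => fst p z + hump (e * amplitude k' N) N x z,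
     Rmax (snd p) (PI * dirichlet_sup (N - 1) + 1))
  end.

Definition approx (k : nat) : SU2 -> R := fst (stage k).
Definition stage_bound (k : nat) : R := snd (stage k).
Definition freq (k : nat) : nat := next_freq k (stage_bound k).
Definition center (k : nat) : SU2 := xs (target k).
Definition hump_sum (k : nat) : R :=
  partial_sum (freq k - 1) (hump (amplitude k (freq k)) (freq k) (center k)) (center k).
Definition approx_sum (k : nat) : R := partial_sum (freq k - 1) (approx k) (center k).
Definition hump_sign (k : nat) : R :=
  if Rle_dec (Rabs (hump_sum k)) (Rabs (approx_sum k + hump_sum k)) then 1 else -1.
Definition term (k : nat) : SU2 -> R :=
  hump (hump_sign k * amplitude k (freq k)) (freq k) (center k).

Lemma approx_S k z : approx (S k) z = approx k z + term k z.
Proof. reflexivity. Qed.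

Lemma stage_bound_S k :
  stage_bound (S k) = Rmax (stage_bound k) (PI * dirichlet_sup (freq k - 1) + 1).
Proof. reflexivity. Qed.

Lemma stage_bound_ge1 k : 1 <= stage_bound k.
Proof.
  induction k; [unfold stage_bound; simpl; lra|].
  rewrite stage_bound_S; eapply Rle_trans; [exact IHk | apply Rmax_l].
Qed.

Lemma stage_bound_after k m : (k < m)%nat ->
  PI * dirichlet_sup (freq k - 1) + 1 <= stage_bound m.
Proof.
  induction 1; rewrite stage_bound_S; [apply Rmax_r|].
  eapply Rle_trans; [exact IHle | apply Rmax_l].
Qed.

Lemma freq_spec k : (2 <= freq k)%nat /\
  2 ^ S k * INR (S k) <= INR (freq k - 1) * Rpower (INR (freq k)) (- alpha) /\
  stage_bound k * Rpower (INR (freq k)) (- alpha) <= 1.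
Proof.
  unfold freq, next_freq; set (K := Rmax (2 ^ S k * INR (S k)) (stage_bound k)).
  assert (HK : 0 <= K)
    by (pose proof (stage_bound_ge1 k); pose proof (Rmax_r (2 ^ S k * INR (S k)) (stage_bound k));
        unfold K; lra).
  destruct (large_freq_spec K HK) as [H1 [H2 H3]]; split; auto.
  pose proof (Rpower_pos (INR (large_freq K)) (- alpha)); split.
  - eapply Rle_trans; [apply Rmax_l | exact H2].
  - eapply Rle_trans; [| exact H3]; apply Rmult_le_compat_r; [lra | apply Rmax_r].
Qed.

Lemma Rabs_sign k : Rabs (hump_sign k) = 1.
Proof. unfold hump_sign; destruct (Rle_dec _ _); unfold Rabs; destruct (Rcase_abs _); lra. Qed.

Lemma Rabs_sign_amplitude k : Rabs (hump_sign k * amplitude k (freq k)) = amplitude k (freq k).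
Proof.
  rewrite Rabs_mult, Rabs_sign, Rmult_1_l, Rabs_right; [auto|].
  apply Rle_ge, Rlt_le, Rmult_lt_0_compat; [apply pow_lt; lra | apply Rpower_pos].
Qed.

Lemma Rabs_term_le k z : Rabs (term k z) <= (/ 2) ^ k / stage_bound k.
Proof.
  unfold term; eapply Rle_trans; [apply Rabs_hump_le|]; rewrite Rabs_sign_amplitude.
  unfold amplitude; destruct (freq_spec k) as [_ [_ H]]; pose proof (stage_bound_ge1 k).
  pose proof (pow_lt (/ 2) k ltac:(lra)); pose proof (Rpower_pos (INR (freq k)) (- alpha)).
  unfold Rdiv; apply Rmult_le_compat_l; [lra|].
  apply Rmult_le_reg_l with (stage_bound k); [lra|]; rewrite Rinv_r by lra; lra.
Qed.

Lemma Rabs_term_le_geom k z : Rabs (term k z) <= (/ 2) ^ k.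
Proof.
  eapply Rle_trans; [apply Rabs_term_le|]; pose proof (stage_bound_ge1 k).
  pose proof (pow_lt (/ 2) k ltac:(lra)); unfold Rdiv.
  rewrite <- (Rmult_1_r ((/ 2) ^ k)) at 2; apply Rmult_le_compat_l; [lra|].
  rewrite <- Rinv_1; apply Rinv_le_contravar; lra.
Qed.

(* The amplitude N^(-alpha) exactly cancels the factor N^alpha of hump_holder. *)
Lemma term_holder k z z' :
  Rabs (term k z - term k z') <= 3 * (/ 2) ^ k * hpow (su2_dist z z') alpha.
Proof.
  unfold term; destruct (freq_spec k) as [HN _].
  eapply Rle_trans; [apply hump_holder; [exact Halpha | lia]|].
  rewrite Rabs_sign_amplitude; unfold amplitude.
  assert (E : Rpower (INR (freq k)) (- alpha) * Rpower (INR (freq k)) alpha = 1).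
  { rewrite <- Rpower_plus, Rplus_opp_l; apply Rpower_O, (lt_INR 0); lia. }
  right; transitivity (3 * (/ 2) ^ k * (Rpower (INR (freq k)) (- alpha) *
    Rpower (INR (freq k)) alpha) * hpow (su2_dist z z') alpha); [ring | rewrite E; ring].
Qed.

Lemma Lip_term k : Lip alpha (term k).
Proof.
  exists (3 * (/ 2) ^ k); split; [pose proof (pow_lt (/ 2) k ltac:(lra)); lra | apply term_holder].
Qed.

Lemma Lip_approx k : Lip alpha (approx k).
Proof.
  induction k; [apply (Lip_const alpha 0) | apply (Lip_plus alpha (approx k) (term k)); auto].
  apply Lip_term.
Qed.

Lemma approx_sum_terms k z : approx (S k) z = sum_f_R0 (fun m => term m z) k.
Proof.
  induction k; rewrite approx_S; [unfold approx; simpl; ring | rewrite IHk; auto].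
Qed.

Definition divergent_fn (z : SU2) : R := Series (fun m => term m z).

Lemma ex_series_term z : ex_series (fun m => term m z).
Proof.
  apply ex_series_Rabs, (ex_series_le_geom_half _ 1); intro.
  rewrite Rmult_1_l; apply Rabs_term_le_geom.
Qed.

Lemma Lip_divergent_fn : Lip alpha divergent_fn.
Proof.
  exists 6; split; [lra|]; intros z z'; unfold divergent_fn.
  rewrite <- Series_minus by apply ex_series_term.
  replace (6 * hpow (su2_dist z z') alpha) with (2 * (3 * hpow (su2_dist z z') alpha)) by ring.
  apply Rabs_Series_le_geom_half; intros n.
  eapply Rle_trans; [apply term_holder | right; ring].
Qed.

Definition tail (k : nat) (z : SU2) : R := divergent_fn z - approx (S k) z.

Lemma tail_Series k z : tail k z = Series (fun j => term (S k + j) z).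
Proof.
  unfold tail, divergent_fn; rewrite (Series_incr_n _ (S k)) by (lia || apply ex_series_term).
  simpl pred; rewrite approx_sum_terms; ring.
Qed.

Lemma Rabs_tail_le k z : Rabs (tail k z) <= 2 / (PI * dirichlet_sup (freq k - 1) + 1).
Proof.
  rewrite tail_Series; set (c := PI * dirichlet_sup (freq k - 1) + 1).
  assert (Hc : 1 <= c)
    by (unfold c; pose proof PI_RGT_0; pose proof (dirichlet_sup_ge0 (freq k - 1)); nra).
  eapply Rle_trans; [apply (Rabs_Series_le_geom_half _ (/ c)) | unfold Rdiv; right; ring].
  intros j.
  eapply Rle_trans; [apply Rabs_term_le|].
  pose proof (stage_bound_after k (S k + j) ltac:(lia)); fold c in H.
  pose proof (stage_bound_ge1 (S k + j)).
  unfold Rdiv; rewrite Rmult_comm; apply Rmult_le_compat.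
  - apply Rlt_le, Rinv_0_lt_compat; lra.
  - apply pow_le; lra.
  - apply Rinv_le_contravar; lra.
  - rewrite pow_add; pose proof (pow_lt (/ 2) j ltac:(lra)); pose proof (pow_lt (/ 2) k ltac:(lra)).
    assert ((/ 2) ^ k <= 1) by (rewrite <- (pow1 k); apply pow_incr; lra).
    simpl; nra.
Qed.

Lemma hump_sum_eq k : hump_sum k = - amplitude k (freq k) * INR (freq k - 1) / 2.
Proof. unfold hump_sum; apply partial_sum_hump; apply freq_spec. Qed.

Lemma hump_sum_large k : INR (S k) <= Rabs (hump_sum k).
Proof.
  rewrite hump_sum_eq; destruct (freq_spec k) as [_ [H _]].
  pose proof (pos_INR (freq k - 1)); pose proof (pow_lt (/ 2) k ltac:(lra)).
  pose proof (Rpower_pos (INR (freq k)) (- alpha)); unfold amplitude in *.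
  assert (0 <= (/ 2) ^ k * Rpower (INR (freq k)) (- alpha) * INR (freq k - 1))
    by (apply Rmult_le_pos; [apply Rmult_le_pos|]; lra).
  rewrite Rabs_left1 by lra.
  apply Rmult_le_reg_l with (2 * 2 ^ k); [pose proof (pow_lt 2 k ltac:(lra)); lra|].
  eapply Rle_trans; [simpl in H; exact H | right].
  replace ((/ 2) ^ k) with (/ 2 ^ k) by (rewrite pow_inv; auto).
  field; apply pow_nonzero; lra.
Qed.

(* F = F_k + term k + tail k: the hump has size >= k + 1, its sign prevents cancellation
   with F_k, and the tail is too small to matter. *)
Lemma partial_sum_divergent_fn_large k :
  INR k - 1 < Rabs (partial_sum (freq k - 1) divergent_fn (center k)).
Proof.
  assert (HT : Lip alpha (tail k))
    by (apply Lip_minus; [apply Lip_divergent_fn | apply Lip_approx]).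
  replace divergent_fn with (fun z => approx k z + term k z + tail k z)
    by (apply functional_extensionality; intro z; unfold tail; rewrite approx_S; ring).
  rewrite !(partial_sum_plus alpha Halpha) by auto using Lip_plus, Lip_approx, Lip_term.
  replace (partial_sum (freq k - 1) (term k) (center k)) with (hump_sign k * hump_sum k)
    by (unfold term; rewrite partial_sum_hump, hump_sum_eq by apply (freq_spec k); field).
  fold (approx_sum k); set (P := partial_sum (freq k - 1) (tail k) (center k)).
  assert (HP : Rabs P < 2).
  { eapply Rle_lt_trans; [apply (Rabs_partial_sum_le alpha Halpha); [exact HT | apply Rabs_tail_le]|].
    pose proof PI_RGT_0; pose proof (dirichlet_sup_ge0 (freq k - 1)).
    set (D := dirichlet_sup (freq k - 1)) in *.
    apply Rmult_lt_reg_r with (PI * D + 1); [nra|].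
    replace (PI * (2 / (PI * D + 1) * D) * (PI * D + 1)) with (2 * (PI * D)) by (field; nra); nra. }
  pose proof (Rabs_le_signed_sum (approx_sum k) (hump_sum k)); fold (hump_sign k) in H.
  pose proof (hump_sum_large k); rewrite S_INR in H0.
  pose proof (Rabs_triang_inv (approx_sum k + hump_sign k * hump_sum k) (- P)).
  rewrite Rabs_Ropp in H1; unfold Rminus in H1; rewrite Ropp_involutive in H1.
  lra.
Qed.

End Construction.

Theorem theorem1 (alpha : R) (xs : nat -> SU2) :
  0 < alpha < 1 ->
  exists f : SU2 -> R, Lip alpha f /\
    forall (i : nat) (M : R), exists N : nat, (1 <= N)%nat /\ M < Rabs (partial_sum N f (xs i)).
Proof.
  intros Ha; exists (divergent_fn alpha Ha xs); split; [apply Lip_divergent_fn|].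
  intros i M; destruct (INR_unbounded (M + 1)) as [m Hm].
  set (k := Cantor.to_nat (i, m)).
  assert (Hk : center xs k = xs i)
    by (unfold center, target, k; rewrite Cantor.cancel_of_to; reflexivity).
  assert (Hmk : (m <= k)%nat) by (unfold k, Cantor.to_nat; lia).
  exists (freq alpha Ha xs k - 1)%nat; split; [destruct (freq_spec alpha Ha xs k); lia|].
  pose proof (partial_sum_divergent_fn_large alpha Ha xs k) as B; rewrite Hk in B.
  pose proof (le_INR _ _ Hmk); lra.
Qed.
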